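(* Let $D>0$, let $(L,\mathbf N)$ be an architecture with $N_0=d$ and width $W=\max_\ell N_\ell$, let $q\in[1,\infty]$, $r\ge1$, $c:=Dd^{1/q}+1$, and let $0<\varepsilon<cL^2(2r)^{L-1}$. Let $0<\eta\le\varepsilon\,(cWL^2(2r)^{L-1})^{-1}$ and let $Q:\Theta_{L,\mathbf N}\to\Theta_{L,\mathbf N}$ satisfy $\|Q(\theta)-\theta\|_\infty\le\eta$ for all $\theta\in\Theta^q_{L,\mathbf N}(r)$. Then $$\max_{\theta\in\Theta^q_{L,\mathbf N}(r)}\ \max_{x\in[-D,D]^d}\|R_\theta(x)-R_{Q(\theta)}(x)\|_q\le\varepsilon.$$
   Context: ReLU $\rho(x)=\max(0,x)$ coordinatewise. Architecture $(L,\mathbf N)$, $\mathbf N=(N_0,\dots,N_L)$; parameters $\theta=(W_1,\dots,W_L,b_1,\dots,b_L)$, $W_\ell\in\mathbb R^{N_\ell\times N_{\ell-1}}$, $b_\ell\in\mathbb R^{N_\ell}$, forming $\Theta_{L,\mathbf N}$; $\|\theta\|_\infty$ = max absolute value of coordinates. Realization: $R_\theta(x)=W_Ly_{L-1}(x)+b_L$, $y_0=x$, $y_\ell=\rho(W_\ell y_{\ell-1}+b_\ell)$, $1\le\ell\le L-1$. $\|M\|_{q\to q}$ is the operator norm induced by $\|\cdot\|_q$. $\Theta^q_{L,\mathbf N}(r)=\{\theta:\|W_\ell\|_{q\to q}\le r,\ \|b_\ell\|_q\le r\ \forall\ell\}$. $d^{1/\infty}:=1$. *)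

From HB Require Import structures.
From mathcomp Require Import all_boot all_order all_algebra.
From mathcomp Require Import all_classical all_reals all_analysis.
Set Implicit Arguments. Unset Strict Implicit. Unset Printing Implicit Defensive.
Import Order.TTheory GRing.Theory Num.Theory.
Local Open Scope ring_scope.
Local Open Scope classical_set_scope.

Section NN.
Variable R : realType.

Definition qnorm (q : \bar R) (n : nat) (v : 'cV[R]_n) : R :=
  match q with
  | EFin p => (\sum_(i < n) `|v i 0| `^ p) `^ (p^-1)
  | +oo%E => \big[Num.max/0]_(i < n) `|v i 0|
  | -oo%E => 0
  end.

Definition opnorm (q : \bar R) (m n : nat) (M : 'M[R]_(m, n)) : R :=
  sup [set qnorm q (M *m v) | v in [set v : 'cV[R]_n | qnorm q v <= 1]].

Definition pow_inv (d : nat) (q : \bar R) : R :=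
  match q with
  | EFin p => (d%:R) `^ (p^-1)
  | _ => 1
  end.

Definition relu (n : nat) (v : 'cV[R]_n) : 'cV[R]_n := map_mx (fun a => Num.max a 0) v.

Variables (L : nat) (N : nat -> nat).

(* Parameters theta = (W_1..W_L, b_1..b_L): the entry at index l : 'I_L is
   (W_{l+1}, b_{l+1}) with W_{l+1} : N_{l+1} x N_l and b_{l+1} : N_{l+1}. *)
Definition params := forall l : 'I_L, 'M[R]_(N l.+1, N l) * 'cV[R]_(N l.+1).

Definition getW (th : params) (l : nat) : 'M[R]_(N l.+1, N l) :=
  (if (l < L)%N as b return (l < L)%N = b -> 'M[R]_(N l.+1, N l)
   then fun h => (th (Ordinal h)).1 else fun _ => 0) (erefl _).

Definition getb (th : params) (l : nat) : 'cV[R]_(N l.+1) :=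
  (if (l < L)%N as b return (l < L)%N = b -> 'cV[R]_(N l.+1)
   then fun h => (th (Ordinal h)).2 else fun _ => 0) (erefl _).

(* pre k = W_k y_{k-1} + b_k for k >= 1, pre 0 = x;
   y_0 = x, y_k = relu (pre k) for 1 <= k <= L-1. *)
Fixpoint pre (th : params) (x : 'cV[R]_(N 0)) (k : nat) : 'cV[R]_(N k) :=
  match k with
  | 0 => x
  | k'.+1 => getW th k' *m (if k' == 0%N then pre th x k' else relu (pre th x k'))
             + getb th k'
  end.

Definition realization (th : params) (x : 'cV[R]_(N 0)) : 'cV[R]_(N L) := pre th x L.

Definition param_supnorm (th : params) : R :=
  \big[Num.max/0]_(l < L)
    Num.max (\big[Num.max/0]_(i < N l.+1) \big[Num.max/0]_(j < N l) `|(th l).1 i j|)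
            (\big[Num.max/0]_(i < N l.+1) `|(th l).2 i 0|).

Definition param_sub (th th' : params) : params :=
  fun l => ((th l).1 - (th' l).1, (th l).2 - (th' l).2).

Definition ball_params (q : \bar R) (r : R) : set params :=
  [set th | forall l : 'I_L, opnorm q (th l).1 <= r /\ qnorm q (th l).2 <= r].

Definition width : nat := \max_(l < L.+1) N l.

End NN.

From mathcomp Require Import all_boot all_order all_algebra.
From mathcomp Require Import all_classical all_reals all_analysis.
From mathcomp Require Import ring lra.
Import Order.TTheory GRing.Theory Num.Theory.
Set Implicit Arguments. Unset Strict Implicit. Unset Printing Implicit Defensive.
Local Open Scope ring_scope.

(** Write [e_k] for the q-distance between the [k]-th pre-activations of [theta]
and [Q(theta)], and [delta = W eta].  Entrywise closeness and Hoelder's inequality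
give [|(W'_k - W_k) v| <= delta |v|] and [|b_k - b'_k| <= delta]; together with
[|W_k| <= r] and the 1-Lipschitz ReLU this yields
[e_(k+1) <= (r + delta) e_k + delta (|y_k| + 1)], where the hidden states satisfy
[|y_k| <= r^k (|x| + k)].  As [delta < 1 <= r], induction gives
[e_(k+1) <= delta (|x| + 1) (2r)^k (k+1)^2]; at [k = L - 1], with [|x| + 1 <= c],
this is at most [eps] by the choice of [eta]. *)

Section QNorm.
Variable R : realType.
Local Open Scope classical_set_scope.

Lemma ege1P (q : \bar R) : (1 <= q)%E -> q = +oo%E \/ exists2 p, q = p%:E & 1 <= p.
Proof. by case: q => [p|_|] //; [right; exists p | left]. Qed.

Lemma qnorm_ge0 q n (v : 'cV[R]_n) : 0 <= qnorm q v.
Proof.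
case: q => [p||] //=; first exact: powR_ge0.
by elim/big_ind: _ => // a b ha hb; rewrite le_max ha.
Qed.

Lemma le_bigmax_norm n (v : 'cV[R]_n) i : `|v i 0| <= \big[Num.max/0]_(j < n) `|v j 0|.
Proof. exact: (le_bigmax _ (fun j => `|v j 0|) i). Qed.

Let ler_powR2r (e x y : R) : 0 <= e -> 0 <= x -> x <= y -> x `^ e <= y `^ e.
Proof.
by move=> e_ge0 x_ge0 xy; apply: ge0_ler_powR; rewrite ?nnegrE // (le_trans x_ge0).
Qed.

Let sum_powR_ge0 n (F : 'I_n -> R) (e : R) : 0 <= \sum_(i < n) F i `^ e.
Proof. by rewrite sumr_ge0 // => i _; rewrite powR_ge0. Qed.

Let measurable_nat (f : nat -> R) : measurable_fun setT f. Proof. by []. Qed.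

Definition coord_seq n (v : 'cV[R]_n) (k : nat) : R :=
  oapp (fun i : 'I_n => v i 0) 0 (insub k).

Lemma coord_seqE n (v : 'cV[R]_n) (i : 'I_n) : coord_seq v i = v i 0.
Proof. by rewrite /coord_seq valK. Qed.

Lemma coord_seqD n (u v : 'cV[R]_n) k :
  coord_seq (u + v) k = coord_seq u k + coord_seq v k.
Proof.
by rewrite /coord_seq; case: insubP => [i _ _|_] /=; rewrite ?mxE ?addr0.
Qed.

Section FiniteExponent.
Variable p : R.
Hypothesis p_gt0 : 0 < p.

(* Finite [p]-sums are [L^p] norms for the counting measure on [nat], which
   gives access to the Minkowski and Hoelder inequalities of the library. *)
Lemma Lnorm_coord_seq n (v : 'cV[R]_n) :
  Lnorm counting p%:E (EFin \o coord_seq v) = (qnorm p%:E v)%:E.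
Proof.
rewrite Lnorm_counting //.
rewrite (nneseries_split 0 n) => [|k]; last by rewrite lee_fin powR_ge0.
rewrite add0n eseries0 ?adde0 => [|k kn _]; last first.
  by rewrite /= /coord_seq insubF ?normr0 ?powR0 ?gt_eqF // ltnNge kn.
rewrite big_mkord sumEFin poweR_EFin; congr (_ `^ _)%:E.
by apply: eq_bigr => i _; rewrite /= coord_seqE.
Qed.

End FiniteExponent.

Lemma qnorm1 n (v : 'cV[R]_n) : qnorm 1%:E v = \sum_(i < n) `|v i 0|.
Proof.
rewrite /= invr1 powRr1; last by rewrite sumr_ge0 // => i _; rewrite powR_ge0.
by apply: eq_bigr => i _; rewrite powRr1.
Qed.

Section FiniteExponentGe1.
Variable p : R.
Hypothesis p_ge1 : 1 <= p.

Let p_gt0 : 0 < p. Proof. exact: lt_le_trans ltr01 p_ge1. Qed.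

Lemma qnormD_fin n (u v : 'cV[R]_n) : qnorm p%:E (u + v) <= qnorm p%:E u + qnorm p%:E v.
Proof.
have := @minkowski_EFin _ _ R counting (coord_seq u) (coord_seq v) p
  (measurable_nat _) (measurable_nat _) p_ge1.
rewrite (@eq_Lnorm _ _ _ _ _ _ (EFin \o coord_seq (u + v))) => [|k]; last first.
  by rewrite /= coord_seqD.
by rewrite !Lnorm_coord_seq // -EFinD lee_fin.
Qed.

Lemma sum_norm_le_qnorm n (v : 'cV[R]_n) :
  \sum_(i < n) `|v i 0| <= n%:R `^ (1 - p^-1) * qnorm p%:E v.
Proof.
have [<-|p_neq1] := eqVneq 1 p; first by rewrite invr1 subrr powRr0 mul1r qnorm1.
have p_gt1 : 1 < p by rewrite lt_neqAle p_neq1.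
pose p' := p / (p - 1).
have p'_gt0 : 0 < p' by rewrite divr_gt0 // subr_gt0.
have p'V : p'^-1 = 1 - p^-1 by rewrite invf_div mulrBl divff ?gt_eqF // mul1r.
have conj_pp' : p^-1 + p'^-1 = 1 by rewrite p'V addrC subrK.
pose one : 'cV[R]_n := const_mx 1.
have := @hoelder _ _ R counting (coord_seq v) (coord_seq one) p p'
  (measurable_nat _) (measurable_nat _) p_gt0 p'_gt0 conj_pp'.
rewrite (@eq_Lnorm _ _ _ _ _ _ (EFin \o coord_seq v)) => [|k]; last first.
  rewrite /= /coord_seq; case: insubP => [i _ _|_] /=; last by rewrite mulr0.
  by rewrite mxE mulr1.
rewrite (Lnorm_coord_seq ltr01) (Lnorm_coord_seq p_gt0) (Lnorm_coord_seq p'_gt0).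
rewrite qnorm1 -EFinM lee_fin mulrC => /le_trans; apply.
rewrite ler_wpM2r ?qnorm_ge0 //= p'V.
under eq_bigr do rewrite mxE normr1 powR1.
by rewrite sumr_const card_ord.
Qed.

End FiniteExponentGe1.

Section QNormGe1.
Variable q : \bar R.
Hypothesis q_ge1 : (1 <= q)%E.

Lemma qnorm_le_norm n (u v : 'cV[R]_n) :
  (forall i, `|u i 0| <= `|v i 0|) -> qnorm q u <= qnorm q v.
Proof.
case: (ege1P q_ge1) => [->|[p -> p_ge1]] uv /=.
  apply: bigmax_le => [|i _]; first exact: (@qnorm_ge0 +oo%E).
  exact: le_trans (uv i) (le_bigmax_norm _ _).
have p_gt0 : 0 < p by apply: lt_le_trans p_ge1.
apply: ler_powR2r; rewrite ?invr_ge0 ?(ltW p_gt0) ?sum_powR_ge0 //.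
by apply: ler_sum => i _; apply: ler_powR2r; rewrite ?(ltW p_gt0).
Qed.

Lemma qnormN n (v : 'cV[R]_n) : qnorm q (- v) = qnorm q v.
Proof. by apply/eqP; rewrite eq_le !qnorm_le_norm // => i; rewrite mxE normrN. Qed.

Lemma qnormD n (u v : 'cV[R]_n) : qnorm q (u + v) <= qnorm q u + qnorm q v.
Proof.
case: (ege1P q_ge1) => [->|[p -> p_ge1]] /=; last exact: qnormD_fin.
apply: bigmax_le => [|i _]; first by rewrite addr_ge0 ?(@qnorm_ge0 +oo%E).
by rewrite mxE; apply: le_trans (ler_normD _ _) (lerD _ _); apply: le_bigmax_norm.
Qed.

Lemma norm_coord_le_qnorm n (v : 'cV[R]_n) i : `|v i 0| <= qnorm q v.
Proof.
case: (ege1P q_ge1) => [->|[p -> p_ge1]] /=; first exact: le_bigmax_norm.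
have p_gt0 : 0 < p by apply: lt_le_trans p_ge1.
rewrite -{1}(@powRr1 _ `|v i 0|) // -(@mulfV _ p) ?gt_eqF // powRrM.
apply: ler_powR2r; rewrite ?invr_ge0 ?(ltW p_gt0) ?powR_ge0 //.
by rewrite (bigD1 i) //= lerDl sumr_ge0 // => j _; rewrite powR_ge0.
Qed.

Lemma qnorm_le_pow_inv n (v : 'cV[R]_n) (B : R) : 0 <= B ->
  (forall i, `|v i 0| <= B) -> qnorm q v <= pow_inv n q * B.
Proof.
case: (ege1P q_ge1) => [->|[p -> p_ge1]] B_ge0 vB /=.
  by rewrite mul1r; apply: bigmax_le.
have p_gt0 : 0 < p by apply: lt_le_trans p_ge1.
rewrite -{1}(@powRr1 _ B) // -[in B `^ _](@mulfV _ p) ?gt_eqF // powRrM.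
rewrite -powRM ?powR_ge0 //.
apply: ler_powR2r; rewrite ?invr_ge0 ?(ltW p_gt0) ?sum_powR_ge0 //.
rewrite mulr_natl -[in X in _ <= X](card_ord n) -sumr_const; apply: ler_sum => i _.
by apply: ler_powR2r; rewrite ?(ltW p_gt0).
Qed.

Lemma qnorm0 n : qnorm q (0 : 'cV[R]_n) = 0.
Proof.
apply/eqP; rewrite eq_le qnorm_ge0 andbT.
by rewrite -(mulr0 (pow_inv n q)) qnorm_le_pow_inv // => i; rewrite mxE normr0.
Qed.

Lemma qnorm_eq0 n (v : 'cV[R]_n) : qnorm q v = 0 -> v = 0.
Proof.
move=> v0; apply/matrixP => i j; rewrite (ord1 j) mxE; apply/normr0_eq0.
by apply/eqP; rewrite eq_le normr_ge0 andbT -v0 norm_coord_le_qnorm.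
Qed.

Lemma qnormZ_le n (v : 'cV[R]_n) (a : R) : 0 <= a -> qnorm q (a *: v) <= a * qnorm q v.
Proof.
case: (ege1P q_ge1) => [->|[p -> p_ge1]] a_ge0 /=.
  apply: bigmax_le => [|i _]; first by rewrite mulr_ge0 ?(@qnorm_ge0 +oo%E).
  by rewrite mxE normrM ger0_norm // ler_wpM2l // le_bigmax_norm.
have p_gt0 : 0 < p by apply: lt_le_trans p_ge1.
under eq_bigr do rewrite mxE normrM ger0_norm // powRM //.
rewrite -mulr_sumr powRM ?powR_ge0 ?sum_powR_ge0 // -powRrM mulfV ?gt_eqF //.
by rewrite powRr1.
Qed.

Lemma pow_inv_ge0 n : 0 <= pow_inv n q.
Proof. by case: q => [p||] //=; rewrite powR_ge0. Qed.

Lemma pow_inv_le_nat n : (0 < n)%N -> pow_inv n q <= n%:R.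
Proof.
case: (ege1P q_ge1) => [->|[p -> p_ge1]] n_gt0 /=; first by rewrite ler1n.
by apply: ler1_powR; rewrite ?ler1n // invf_le1 // (lt_le_trans ltr01).
Qed.

Lemma qnorm_le_dim n W (v : 'cV[R]_n) (e : R) : (n <= W)%N -> 0 <= e ->
  (forall i, `|v i 0| <= e) -> qnorm q v <= W%:R * e.
Proof.
move=> nW e_ge0 ve; case: n => [|n] in v nW ve *.
  by rewrite flatmx0 qnorm0 mulr_ge0.
apply: le_trans (qnorm_le_pow_inv e_ge0 ve) (ler_wpM2r e_ge0 _).
by apply: le_trans (pow_inv_le_nat _) _; rewrite ?ler_nat.
Qed.

Lemma pow_inv_mul_sum_norm_le m n W (v : 'cV[R]_n) : (m <= W)%N -> (n <= W)%N ->
  pow_inv m q * \sum_(j < n) `|v j 0| <= W%:R * qnorm q v.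
Proof.
case: (ege1P q_ge1) => [->|[p -> p_ge1]] mW nW /=.
  rewrite mul1r (le_trans (ler_sum _ (fun j _ => le_bigmax_norm v j))) //.
  by rewrite sumr_const card_ord -[_ *+ n]mulr_natl ler_wpM2r ?(@qnorm_ge0 +oo%E) ?ler_nat.
have p_gt0 : 0 < p by apply: lt_le_trans p_ge1.
have p'_ge0 : 0 <= 1 - p^-1 by rewrite subr_ge0 invf_le1.
have W_split : W%:R `^ p^-1 * W%:R `^ (1 - p^-1) = W%:R :> R.
  have p'_conj : p^-1 + (1 - p^-1) = 1 by rewrite addrC subrK.
  by rewrite -powRD p'_conj ?powRr1 ?oner_eq0.
apply: le_trans (ler_wpM2l (powR_ge0 _ _) (sum_norm_le_qnorm p_ge1 v)) _.
rewrite mulrA -W_split ler_wpM2r ?qnorm_ge0 //.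
by apply: ler_pM; rewrite ?powR_ge0 // ler_powR2r ?invr_ge0 ?(ltW p_gt0) ?ler_nat.
Qed.

Lemma qnorm_mulmx_entrywise_le m n W (M : 'M[R]_(m, n)) (v : 'cV[R]_n) (e : R) :
  0 <= e -> (forall i j, `|M i j| <= e) -> (m <= W)%N -> (n <= W)%N ->
  qnorm q (M *m v) <= W%:R * e * qnorm q v.
Proof.
move=> e_ge0 Me mW nW.
have Mv_le i : `|(M *m v) i 0| <= e * \sum_(j < n) `|v j 0|.
  rewrite mxE mulr_sumr (le_trans (ler_norm_sum _ _ _)) // ler_sum // => j _.
  by rewrite normrM ler_wpM2r.
apply: le_trans (qnorm_le_pow_inv _ Mv_le) _; first by rewrite mulr_ge0 ?sumr_ge0.
rewrite mulrCA [X in _ <= X]mulrAC [X in _ <= X]mulrC ler_wpM2l //.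
exact: pow_inv_mul_sum_norm_le.
Qed.

Lemma qnorm_mulmx_le_opnorm m n (M : 'M[R]_(m, n)) (v : 'cV[R]_n) :
  qnorm q (M *m v) <= opnorm q M * qnorm q v.
Proof.
have ub_image : has_ubound [set qnorm q (M *m w) | w in [set w | qnorm q w <= 1]].
  exists (pow_inv m q * \sum_(i < m) \sum_(j < n) `|M i j|) => _ [w /= w_le1 <-].
  apply: qnorm_le_pow_inv => [|i]; first by rewrite !sumr_ge0 // => i _; rewrite sumr_ge0.
  rewrite mxE (le_trans (ler_norm_sum _ _ _)) // (bigD1 i) //=.
  rewrite -[X in X <= _]addr0 lerD ?sumr_ge0 // => [|k _]; last by rewrite sumr_ge0.
  apply: ler_sum => j _; rewrite normrM ler_piMr //.
  exact: le_trans (norm_coord_le_qnorm _ _) w_le1.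
have [v0|v_neq0] := eqVneq (qnorm q v) 0.
  by rewrite v0 mulr0 (qnorm_eq0 v0) mulmx0 qnorm0.
have v_gt0 : 0 < qnorm q v by rewrite lt0r v_neq0 qnorm_ge0.
pose w := (qnorm q v)^-1 *: v.
have w_le1 : qnorm q w <= 1.
  by apply: le_trans (qnormZ_le _ _) _; rewrite ?invr_ge0 ?qnorm_ge0 // mulVf.
have Mw_le : qnorm q (M *m w) <= opnorm q M by apply: ub_le_sup => //; exists w.
have -> : M *m v = qnorm q v *: (M *m w) by rewrite scalemxAr scalerA divff ?scale1r.
apply: le_trans (qnormZ_le _ (ltW v_gt0)) _.
by rewrite [X in _ <= X]mulrC ler_wpM2l ?qnorm_ge0.
Qed.

Lemma norm_max0_sub_le (a b : R) : `|Num.max a 0 - Num.max b 0| <= `|a - b|.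
Proof.
have := ler_norm (a - b); have := ler_norm (b - a); rewrite distrC ler_norml => h1 h2.
apply/andP; have [a_le0|a_gt0] := leP a 0; have [b_le0|b_gt0] := leP b 0.
all: rewrite ?(max_r a_le0) ?(max_r b_le0) ?(max_l (ltW a_gt0)) ?(max_l (ltW b_gt0)).
all: split; lra.
Qed.

Lemma qnorm_reluB_le n (u v : 'cV[R]_n) : qnorm q (relu u - relu v) <= qnorm q (u - v).
Proof. by apply: qnorm_le_norm => i; rewrite !mxE norm_max0_sub_le. Qed.

Lemma qnorm_relu_le n (u : 'cV[R]_n) : qnorm q (relu u) <= qnorm q u.
Proof.
have := qnorm_reluB_le u 0.
suff -> : relu (0 : 'cV[R]_n) = 0 by rewrite !subr0.
by apply/matrixP => i j; rewrite !mxE maxxx.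
Qed.

End QNormGe1.

End QNorm.

Lemma error_bound_step (R : realType) (r dl a e s : R) (k : nat) :
  1 <= r -> 0 <= dl -> dl <= r -> 0 <= a -> 0 <= e ->
  e <= dl * (a + 1) * (2 * r) ^+ k * k.+1%:R ^+ 2 ->
  s <= r ^+ k.+1 * (a + k.+1%:R) ->
  (r + dl) * e + dl * s + dl <= dl * (a + 1) * (2 * r) ^+ k.+1 * k.+2%:R ^+ 2.
Proof.
move=> r_ge1 dl_ge0 dl_le_r a_ge0 e_ge0 e_le s_le.
rewrite -[k.+2%:R]natr1 -[k.+1%:R]natr1 in e_le s_le *.
set K := k%:R in e_le s_le *.
have K_ge0 : 0 <= K by [].
set P := r ^+ k.+1 in s_le *; set T := (2 * r) ^+ k in e_le *.
have P_ge1 : 1 <= P by rewrite exprn_ege1.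
have P_le : P <= 2 * r * T.
  rewrite /P /T -exprS lerXn2r ?nnegrE //; lra.
have err_le : (r + dl) * e <= 2 * r * (dl * (a + 1) * T * (K + 1) ^+ 2).
  by apply: ler_pM => //; lra.
have T_ge0 : 0 <= T by rewrite exprn_ge0 //; lra.
have bias_le : s + 1 <= 2 * r * T * (a + 1) * (2 * K + 3).
  have s1_le : s + 1 <= P * (a + K + 2) by nra.
  have aK_le : a + K + 2 <= (a + 1) * (2 * K + 3) by nra.
  apply: le_trans s1_le _; rewrite -mulrA.
  by apply: ler_pM => //; lra.
have := ler_wpM2l dl_ge0 bias_le; rewrite mulrDr mulr1 => dl_bias_le.
have -> : dl * (a + 1) * (2 * r) ^+ k.+1 * (K + 1 + 1) ^+ 2
    = 2 * r * (dl * (a + 1) * T * (K + 1) ^+ 2) + dl * (2 * r * T * (a + 1) * (2 * K + 3)).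
  by rewrite exprS /T; ring.
by rewrite -addrA lerD.
Qed.

Lemma natr_mul_le_of_le_div (R : realType) (n : nat) (x y a : R) :
  0 < a -> 0 <= y -> x <= y / (n%:R * a) -> n%:R * x * a <= y.
Proof.
move=> a_gt0 y_ge0; have [->|n_gt0] := posnP n; first by rewrite !mul0r.
by rewrite ler_pdivlMr ?mulr_gt0 ?ltr0n // mulrCA mulrA.
Qed.

Section Network.
Variables (R : realType) (L : nat) (N : nat -> nat).
Implicit Types (th : params R L N) (x : 'cV[R]_(N 0)).

Lemma getW_ord th (l : 'I_L) : getW th l = (th l).1.
Proof.
case: l => m m_lt /=; rewrite /getW; move: (erefl (m < L)%N).
by rewrite {2 3}m_lt => e; rewrite (bool_irrelevance e m_lt).
Qed.

Lemma getb_ord th (l : 'I_L) : getb th l = (th l).2.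
Proof.
case: l => m m_lt /=; rewrite /getb; move: (erefl (m < L)%N).
by rewrite {2 3}m_lt => e; rewrite (bool_irrelevance e m_lt).
Qed.

Lemma le_param_supnormW th (l : 'I_L) i j : `|(th l).1 i j| <= param_supnorm th.
Proof.
apply: (bigmax_sup l) => //; rewrite le_max; apply/orP; left.
by apply: (bigmax_sup i) => //; apply: (bigmax_sup j).
Qed.

Lemma le_param_supnormb th (l : 'I_L) i : `|(th l).2 i 0| <= param_supnorm th.
Proof.
apply: (bigmax_sup l) => //; rewrite le_max; apply/orP; right.
exact: (bigmax_sup i).
Qed.

Lemma leq_width l : (l <= L)%N -> (N l <= width L N)%N.
Proof.
move=> l_le; exact: (@leq_bigmax _ (fun i : 'I_L.+1 => N i) (Ordinal (l_le : (l < L.+1)%N))).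
Qed.

Definition hidden th x k : 'cV[R]_(N k) :=
  if k == 0%N then pre th x k else relu (pre th x k).

Lemma pre_layer th x k (k_lt : (k < L)%N) :
  pre th x k.+1 = (th (Ordinal k_lt)).1 *m hidden th x k + (th (Ordinal k_lt)).2.
Proof. by rewrite /= -(getW_ord th (Ordinal k_lt)) -(getb_ord th (Ordinal k_lt)). Qed.

Variables (q : \bar R) (r : R).
Hypotheses (q_ge1 : (1 <= q)%E) (r_ge1 : 1 <= r).

Lemma qnorm_param_subW_le th th' (eta : R) : 0 <= eta ->
  param_supnorm (param_sub th' th) <= eta -> forall (l : 'I_L) v,
  qnorm q (((th' l).1 - (th l).1) *m v) <= (width L N)%:R * eta * qnorm q v.
Proof.
move=> eta_ge0 close l v; apply: qnorm_mulmx_entrywise_le => // [i j||].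
- exact: le_trans (le_param_supnormW (param_sub th' th) i j) close.
- exact/leq_width.
- exact/leq_width/ltnW.
Qed.

Lemma qnorm_param_subb_le th th' (eta : R) : 0 <= eta ->
  param_supnorm (param_sub th' th) <= eta -> forall l : 'I_L,
  qnorm q ((th l).2 - (th' l).2) <= (width L N)%:R * eta.
Proof.
move=> eta_ge0 close l; apply: qnorm_le_dim => // [|i]; first exact/leq_width.
rewrite -opprB mxE normrN.
exact: le_trans (le_param_supnormb (param_sub th' th) i) close.
Qed.

Lemma qnorm_hidden_le th x k : ball_params q r th -> (k <= L)%N ->
  qnorm q (hidden th x k) <= r ^+ k * (qnorm q x + k%:R).
Proof.
move=> th_ball; elim: k => [|k IHk] k_le; first by rewrite expr0 mul1r addr0.
have [W_le b_le] := th_ball (Ordinal k_le).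
apply: le_trans (qnorm_relu_le q_ge1 _) _; rewrite (pre_layer _ _ k_le).
apply: le_trans (qnormD q_ge1 _ _) _.
apply: le_trans (lerD (qnorm_mulmx_le_opnorm q_ge1 _ _) b_le) _.
have r_ge0 : 0 <= r by apply: le_trans r_ge1.
have := ler_wpM2r (qnorm_ge0 q (hidden th x k)) W_le.
have := ler_wpM2l r_ge0 (IHk (ltnW k_le)).
have : r <= r * r ^+ k by rewrite ler_peMr // exprn_ege1.
rewrite exprS -natr1; lra.
Qed.

Variables (th th' : params R L N) (dl : R) (x : 'cV[R]_(N 0)).
Hypotheses (th_ball : ball_params q r th) (dl_ge0 : 0 <= dl) (dl_le_r : dl <= r).
Hypothesis W_close : forall l v, qnorm q (((th' l).1 - (th l).1) *m v) <= dl * qnorm q v.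
Hypothesis b_close : forall l, qnorm q ((th l).2 - (th' l).2) <= dl.

Lemma qnorm_pre_sub_layer k (k_lt : (k < L)%N) :
  qnorm q (pre th x k.+1 - pre th' x k.+1) <=
  (r + dl) * qnorm q (hidden th x k - hidden th' x k) + dl * qnorm q (hidden th x k) + dl.
Proof.
rewrite !(pre_layer _ _ k_lt); have [M_le _] := th_ball (Ordinal k_lt).
move: M_le (@W_close (Ordinal k_lt)) (b_close (Ordinal k_lt)).
set M := (th _).1; set M' := (th' _).1; set b := (th _).2; set b' := (th' _).2.
set u := hidden th x k; set u' := hidden th' x k => M_le MM' bb'.
have -> : M *m u + b - (M' *m u' + b') = M *m (u - u') - (M' - M) *m u' + (b - b').
  rewrite opprD addrACA mulmxBr mulmxBl opprB; congr (_ + _).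
  by rewrite addrA subrK.
have u'_le : qnorm q u' <= qnorm q u + qnorm q (u - u').
  have {1}-> : u' = u - (u - u') by rewrite opprB addrC subrK.
  by apply: le_trans (qnormD q_ge1 _ _) _; rewrite qnormN.
apply: le_trans (qnormD q_ge1 _ _) (lerD _ bb').
apply: le_trans (qnormD q_ge1 _ _) _; rewrite qnormN //.
apply: le_trans (lerD (qnorm_mulmx_le_opnorm q_ge1 _ _) (MM' _)) _.
have := ler_wpM2r (qnorm_ge0 q (u - u')) M_le.
have := ler_wpM2l dl_ge0 u'_le; lra.
Qed.

Lemma qnorm_pre_sub_le k : (k < L)%N ->
  qnorm q (pre th x k.+1 - pre th' x k.+1) <=
  dl * (qnorm q x + 1) * (2 * r) ^+ k * k.+1%:R ^+ 2.
Proof.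
have x_ge0 := qnorm_ge0 q x.
elim: k => [|k IHk] k_lt.
  apply: le_trans (qnorm_pre_sub_layer k_lt) _.
  rewrite /hidden /= subrr qnorm0 // mulr0 add0r expr0 expr1n !mulr1; nra.
apply: le_trans (qnorm_pre_sub_layer k_lt) _.
apply: error_bound_step => //; first exact: qnorm_ge0.
- apply: le_trans (IHk (ltnW k_lt)); exact: qnorm_reluB_le.
- exact: qnorm_hidden_le (ltnW k_lt).
Qed.

Lemma qnorm_realization_sub_le : (0 < L)%N ->
  qnorm q (realization th x - realization th' x) <=
  dl * (qnorm q x + 1) * (2 * r) ^+ L.-1 * L%:R ^+ 2.
Proof. by move=> L_gt0; have := @qnorm_pre_sub_le L.-1; rewrite prednK //; apply. Qed.

End Network.

Theorem mainTheorem5 (R : realType) (L : nat) (N : nat -> nat)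
  (D : R) (q : \bar R) (r eps eta : R)
  (Q : params R L N -> params R L N) :
  (0 < L)%N ->
  0 < D ->
  (1 <= q)%E ->
  1 <= r ->
  let d := N 0%N in
  let c := D * pow_inv d q + 1 in
  let W := width L N in
  0 < eps ->
  eps < c * (L%:R) ^+ 2 * (2 * r) ^+ L.-1 ->
  0 < eta ->
  eta <= eps / (c * W%:R * (L%:R) ^+ 2 * (2 * r) ^+ L.-1) ->
  (forall th, ball_params q r th -> param_supnorm (param_sub (Q th) th) <= eta) ->
  forall th, ball_params q r th ->
  forall x : 'cV[R]_d, (forall i, - D <= x i 0 <= D) ->
  qnorm q (realization th x - realization (Q th) x) <= eps.
Proof.
move=> L_gt0 D_gt0 q_ge1 r_ge1 d c W eps_gt0 eps_lt eta_gt0 eta_le Q_close.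
move=> th th_ball x x_box.
have [eta_ge0 Qth_close] := (ltW eta_gt0, Q_close th th_ball).
have r_gt0 : 0 < r by apply: lt_le_trans r_ge1.
have c_ge1 : 1 <= c by rewrite lerDr mulr_ge0 ?pow_inv_ge0 // ltW.
set Den := c * L%:R ^+ 2 * (2 * r) ^+ L.-1 in eps_lt eta_le *.
have Den_gt0 : 0 < Den by rewrite !mulr_gt0 ?exprn_gt0 ?ltr0n //; lra.
have dl_Den_le : W%:R * eta * Den <= eps.
  apply: natr_mul_le_of_le_div => //; first exact: ltW.
  by rewrite (_ : W%:R * Den = c * W%:R * L%:R ^+ 2 * (2 * r) ^+ L.-1) // /Den; ring.
have dl_le_r : W%:R * eta <= r.
  suff : W%:R * eta * Den < 1 * Den by rewrite ltr_pM2r //; lra.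
  by rewrite mul1r (le_lt_trans dl_Den_le).
have x_le : qnorm q x <= D * pow_inv d q.
  by rewrite mulrC qnorm_le_pow_inv ?(ltW D_gt0) // => i; rewrite ler_norml x_box.
have W_close := qnorm_param_subW_le q_ge1 eta_ge0 Qth_close.
have b_close := qnorm_param_subb_le q_ge1 eta_ge0 Qth_close.
apply: le_trans (qnorm_realization_sub_le q_ge1 r_ge1 x th_ball _ dl_le_r W_close b_close
  L_gt0) (le_trans _ dl_Den_le); first by rewrite mulr_ge0.
have P_ge0 : 0 <= (2 * r) ^+ L.-1 * L%:R ^+ 2 by rewrite mulr_ge0 ?exprn_ge0 //; lra.
have := ler_wpM2l (mulr_ge0 (ler0n _ W) eta_ge0) (ler_wpM2r P_ge0 (lerD x_le (lexx 1))).
rewrite /Den /c; lra.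
Qed.
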